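(* For all integers $6\le n\le m$, \[ \gamma_{2t}(K_n\Box K_m)\ge\min\bigl\{\gamma_{2t}(K_3\Box K_3)+\gamma_{2t}(K_{n-3}\Box K_{m-3}),\ \gamma_{2t}(K_4\Box K_4)+\gamma_{2t}(K_{n-4}\Box K_{m-4})\bigr\}. \]
   Context: For a graph $G=(V,E)$, a set $S\subseteq V$ is a total $2$-dominating set if every vertex of $V$ (including those in $S$) is adjacent to at least $2$ vertices of $S$; $\gamma_{2t}(G)$ is the minimum cardinality of such a set. $G\Box H$ denotes the Cartesian product: vertex set $V(G)\times V(H)$, with $(u_1,v_1)\sim(u_2,v_2)$ iff either $u_1=u_2$ and $v_1\sim v_2$, or $v_1=v_2$ and $u_1\sim u_2$. $K_n$ is the complete graph on $n$ vertices. *)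

From mathcomp Require Import all_boot.
Set Implicit Arguments. Unset Strict Implicit. Unset Printing Implicit Defensive.

Definition total2dom (T : finType) (e : rel T) (S : {set T}) : bool :=
  [forall v : T, 1 < #|[set u in S | e v u]|].

(* gamma_{2t}: minimum cardinality of a total 2-dominating set
   (defaults to #|T| if none exists; never relevant below). *)
Definition gamma2t (T : finType) (e : rel T) : nat :=
  \big[minn/#|T|]_(S : {set T} | total2dom e S) #|S|.

Definition KK_rel (n m : nat) : rel ('I_n * 'I_m) :=
  fun x y => ((x.1 == y.1) && (x.2 != y.2)) || ((x.2 == y.2) && (x.1 != y.1)).

Definition gamma2tKK (n m : nat) : nat := gamma2t (@KK_rel n m).
Arguments KK_rel : clear implicits.

From mathcomp Require Import all_boot zify.
Set Implicit Arguments. Unset Strict Implicit. Unset Printing Implicit Defensive.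

(* A total 2-dominating set of K_x □ K_y meeting every row and column can be
   placed as a diagonal block next to another one, and the sizes add up.  From
   full 1x3 and 3x1 blocks (3 vertices each) and a few small bases this gives
   sets of size about 3(x + y)/4 on a lattice cone of shapes; with the hook of
   K_3 □ K_3 (5 vertices), K_4 □ K_4 (6 vertices) and two full columns this
   bounds the right-hand side from above.
   Conversely, a total 2-dominating set S of K_n □ K_m missing a line has at least
   2n vertices.  Otherwise every vertex of S sends 20 units of charge to its row
   and its column, and every line receives at least 16 except tight lines
   (3 points, each alone in its other line), which receive 12.  The numbers a, b
   of tight rows and columns satisfy a + 3b <= n and 3a + b <= m, and
   4(n + m) <= 5|S| + a + b beats the cone bound in each residue class of
   m + 5n modulo 8. *)

Section TotalDomination.
Variables (T : finType) (e : rel T).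

Lemma total2domP (S : {set T}) :
  reflect (forall v, exists u1 u2, [/\ u1 \in S, u2 \in S, u1 != u2, e v u1 & e v u2])
          (total2dom e S).
Proof.
apply: (iffP forallP) => [dom v | dom v].
  have /card_gt1P [u1 [u2 []]] := dom v.
  by rewrite !inE => /andP[? ?] /andP[? ?] ?; exists u1, u2.
have [u1 [u2 [? ? ? ? ?]]] := dom v.
by apply/card_gt1P; exists u1, u2; rewrite !inE; split; try apply/andP.
Qed.

Lemma nbrs_subset (S S' : {set T}) v :
  S \subset S' -> #|[set u in S | e v u]| <= #|[set u in S' | e v u]|.
Proof.
move=> sSS'; apply: subset_leq_card; apply/subsetP => u.
by rewrite !inE => /andP[/(subsetP sSS') -> ->].
Qed.

Lemma gamma2t_le (S : {set T}) : total2dom e S -> gamma2t e <= #|S|.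
Proof.
move=> domS; rewrite /gamma2t.
have : S \in index_enum {set T} by rewrite mem_index_enum.
elim: (index_enum _) => [//|A r IHr]; rewrite inE big_cons => /orP[/eqP <-|/IHr leS].
  by rewrite domS geq_minl.
by case: ifP => _ //; rewrite geq_min leS orbT.
Qed.

Lemma gamma2t_ge L :
  L <= #|T| -> (forall S : {set T}, total2dom e S -> L <= #|S|) -> L <= gamma2t e.
Proof.
move=> LT LS; apply: (big_ind (fun x => L <= x)) => // x y Lx Ly.
by rewrite leq_min Lx Ly.
Qed.

End TotalDomination.

Section Embedding.
Variables (T T' : finType) (e : rel T) (e' : rel T') (f : T -> T').
Hypotheses (f_inj : injective f) (f_rel : forall u v, e' (f u) (f v) = e u v).

Lemma total2dom_imset_at (S : {set T}) v :
  1 < #|[set u in S | e v u]| -> 1 < #|[set u in f @: S | e' (f v) u]|.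
Proof.
move=> nbrs; apply: leq_trans nbrs _; rewrite -(card_imset _ f_inj).
apply: subset_leq_card; apply/subsetP => _ /imsetP[u + ->].
by rewrite !inE f_rel => /andP[uS ->]; rewrite imset_f.
Qed.

End Embedding.

Lemma card_by_fibres (T J : finType) (f : T -> J) (A : {set T}) :
  #|A| = \sum_j #|[set u in A | f u == j]|.
Proof.
rewrite -sum1_card (partition_big f predT) //=.
by apply: eq_bigr => j _; rewrite -sum1_card; apply: eq_bigl => u; rewrite !inE.
Qed.

Lemma sum_nat_indicator (T : finType) (b : pred T) k :
  \sum_i k * b i = k * #|[set i | b i]|.
Proof.
rewrite -big_distrr /= -sum1dep_card [in RHS]big_mkcond /=.
by congr (_ * _); apply: eq_bigr => i _; case: (b i).
Qed.

(** * Upper bounds from explicit dominating sets *)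

Lemma KK_rel_row n m (i : 'I_n) (j j' : 'I_m) : KK_rel n m (i, j) (i, j') = (j != j').
Proof. by rewrite /KK_rel /= eqxx andbF orbF. Qed.

Lemma KK_rel_col n m (i i' : 'I_n) (j : 'I_m) : KK_rel n m (i, j) (i', j) = (i != i').
Proof. by rewrite /KK_rel /= eqxx /= andbF. Qed.

Lemma ord_other n (i : 'I_n) : 1 < n -> exists j : 'I_n, j != i.
Proof.
move=> n_gt1; have /card_gt0P[j] : 0 < #|[set~ i]| by rewrite cardsC1 card_ord; lia.
by rewrite in_setC1; exists j.
Qed.

Lemma ord_two_others n (i : 'I_n) :
  2 < n -> exists j1 j2 : 'I_n, [/\ j1 != i, j2 != i & j1 != j2].
Proof.
move=> n_gt2; have /card_gt1P[j1 [j2]] : 1 < #|[set~ i]| by rewrite cardsC1 card_ord; lia.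
by rewrite !in_setC1; exists j1, j2.
Qed.

Definition spanning_t2d n m (S : {set 'I_n * 'I_m}) : bool :=
  [&& total2dom (KK_rel n m) S, [forall i, exists j, (i, j) \in S]
    & [forall j, exists i, (i, j) \in S]].

Definition spanning_size n m s :=
  exists2 S : {set 'I_n * 'I_m}, spanning_t2d S & #|S| = s.

Lemma gamma2tKK_le_spanning n m s : spanning_size n m s -> gamma2tKK n m <= s.
Proof. by case=> S /and3P[domS _ _] <-; apply: gamma2t_le. Qed.

Lemma spanning_size0 : spanning_size 0 0 0.
Proof. by exists set0; rewrite ?cards0 //; apply/and3P; split; apply/forallP => -[] // [] . Qed.

Section BlockSum.

Variables x1 x2 y1 y2 : nat.

Definition lblock (u : 'I_x1 * 'I_y1) : 'I_(x1 + x2) * 'I_(y1 + y2) :=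
  (lshift x2 u.1, lshift y2 u.2).
Definition rblock (u : 'I_x2 * 'I_y2) : 'I_(x1 + x2) * 'I_(y1 + y2) :=
  (rshift x1 u.1, rshift y1 u.2).

Lemma lblock_inj : injective lblock.
Proof. by move=> [a b] [c d] [/val_inj -> /val_inj ->]. Qed.
Lemma rblock_inj : injective rblock.
Proof.
move=> [a b] [c d] e; move: (congr1 fst e) (congr1 snd e) => /=.
by move=> /rshift_inj -> /rshift_inj ->.
Qed.

Lemma KK_rel_lblock u v : KK_rel _ _ (lblock u) (lblock v) = KK_rel _ _ u v.
Proof. by rewrite /KK_rel /= !(inj_eq (@lshift_inj _ _)). Qed.
Lemma KK_rel_rblock u v : KK_rel _ _ (rblock u) (rblock v) = KK_rel _ _ u v.
Proof. by rewrite /KK_rel /= !(inj_eq (@rshift_inj _ _)). Qed.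

(* A vertex in an off-diagonal block sees a point of one block in its row and a
   point of the other block in its column: this is why the sets must meet every line. *)
Lemma spanning_size_add s1 s2 :
  spanning_size x1 y1 s1 -> spanning_size x2 y2 s2 ->
  spanning_size (x1 + x2) (y1 + y2) (s1 + s2).
Proof.
move=> [S1 /and3P[dom1 /forallP row1 /forallP col1] <-].
move=> [S2 /and3P[dom2 /forallP row2 /forallP col2] <-].
set S := lblock @: S1 :|: rblock @: S2.
have subL : lblock @: S1 \subset S by apply: subsetUl.
have subR : rblock @: S2 \subset S by apply: subsetUr.
have inL u : u \in S1 -> lblock u \in S by move=> uS; apply: (subsetP subL); rewrite imset_f.
have inR u : u \in S2 -> rblock u \in S by move=> uS; apply: (subsetP subR); rewrite imset_f.
exists S; last first.
  rewrite cardsU (card_imset _ lblock_inj) (card_imset _ rblock_inj).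
  suff -> : lblock @: S1 :&: rblock @: S2 = set0 by rewrite cards0 subn0.
  apply/setP => w; rewrite !inE; apply/negP => /andP[/imsetP[u _ ->] /imsetP[v _ /(congr1 fst)/eqP]].
  by rewrite eq_lrshift.
clearbody S; apply/and3P; split.
- apply/forallP => -[a b]; rewrite -[a]splitK -[b]splitK.
  case: (split a) (split b) => [i|i] [j|j] /=.
  + apply: leq_trans _ (nbrs_subset _ _ subL).
    exact: (total2dom_imset_at lblock_inj KK_rel_lblock (forallP dom1 (i, j))).
  + have /existsP[j1 ij1] := row1 i; have /existsP[i2 i2j] := col2 j.
    apply/card_gt1P; exists (lblock (i, j1)), (rblock (i2, j)); rewrite !inE inL ?inR //=.
    by rewrite /KK_rel /= !eqxx eq_lrshift eq_rlshift orbT /= xpair_eqE eq_lrshift.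
  + have /existsP[j1 ij1] := row2 i; have /existsP[i2 i2j] := col1 j.
    apply/card_gt1P; exists (rblock (i, j1)), (lblock (i2, j)); rewrite !inE inL ?inR //=.
    by rewrite /KK_rel /= !eqxx eq_lrshift eq_rlshift orbT /= xpair_eqE eq_rlshift.
  + apply: leq_trans _ (nbrs_subset _ _ subR).
    exact: (total2dom_imset_at rblock_inj KK_rel_rblock (forallP dom2 (i, j))).
- apply/forallP => a; rewrite -[a]splitK; case: (split a) => i /=.
    by have /existsP[j ij] := row1 i; apply/existsP; exists (lshift y2 j); apply: (inL (i, j)).
  by have /existsP[j ij] := row2 i; apply/existsP; exists (rshift y1 j); apply: (inR (i, j)).
- apply/forallP => b; rewrite -[b]splitK; case: (split b) => j /=.
    by have /existsP[i ij] := col1 j; apply/existsP; exists (lshift x2 i); apply: (inL (i, j)).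
  by have /existsP[i ij] := col2 j; apply/existsP; exists (rshift x1 i); apply: (inR (i, j)).
Qed.

End BlockSum.

Lemma spanning_size_setT p q :
  0 < p -> 0 < q -> 4 <= p + q -> spanning_size p q (p * q).
Proof.
move=> p_gt0 q_gt0 pq_ge4; exists setT; last by rewrite cardsT card_prod !card_ord.
apply/and3P; split; last first.
- by apply/forallP => j; apply/existsP; exists (Ordinal p_gt0); rewrite inE.
- by apply/forallP => i; apply/existsP; exists (Ordinal q_gt0); rewrite inE.
apply/total2domP => -[i j].
have [q_gt2|q_le2] := ltnP 2 q.
  have [j1 [j2 [j1j j2j j12]]] := ord_two_others j q_gt2.
  by exists (i, j1), (i, j2); rewrite !inE !KK_rel_row xpair_eqE eqxx ![j == _]eq_sym.
have [p_gt2|p_le2] := ltnP 2 p.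
  have [i1 [i2 [i1i i2i i12]]] := ord_two_others i p_gt2.
  by exists (i1, j), (i2, j); rewrite !inE !KK_rel_col xpair_eqE eqxx andbT ![i == _]eq_sym.
have [i1 i1i] : exists i1, i1 != i by apply: ord_other; lia.
have [j1 j1j] : exists j1, j1 != j by apply: ord_other; lia.
exists (i, j1), (i1, j); rewrite !inE KK_rel_row KK_rel_col xpair_eqE.
by rewrite ![i == _]eq_sym ![j == _]eq_sym (negbTE j1j) andbF.
Qed.

Lemma spanning_size_cone ax ay s i j : spanning_size ax ay s ->
  spanning_size (ax + i + 3 * j) (ay + 3 * i + j) (s + 3 * i + 3 * j).
Proof.
have span13 : spanning_size 1 3 3 by apply: spanning_size_setT.
have span31 : spanning_size 3 1 3 by apply: spanning_size_setT.
move=> span; elim: i j => [|i IHi] j.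
  elim: j => [|j IHj]; first by move: span; congr spanning_size; lia.
  by move: (spanning_size_add IHj span31); congr spanning_size; lia.
by move: (spanning_size_add (IHi j) span13); congr spanning_size; lia.
Qed.

(* The hypotheses say exactly that x - ax = i + 3j and y - ay = 3i + j have a
   solution in naturals, namely i = (3(y - ay) - (x - ax))/8, j = (3(x - ax) - (y - ay))/8. *)
Lemma gamma2tKK_le_cone ax ay s x y : spanning_size ax ay s ->
  ax <= x -> ay <= y -> ((y - ay) + 5 * (x - ax)) %% 8 = 0 ->
  x - ax <= 3 * (y - ay) -> y - ay <= 3 * (x - ax) ->
  gamma2tKK x y <= s + 3 * ((x - ax) + (y - ay)) %/ 4.
Proof.
move=> span ax_x ay_y cong slope1 slope2.
set i := (3 * (y - ay) - (x - ax)) %/ 8; set j := (3 * (x - ax) - (y - ay)) %/ 8.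
have -> : s + 3 * ((x - ax) + (y - ay)) %/ 4 = s + 3 * i + 3 * j by rewrite /i /j; lia.
have -> : x = ax + i + 3 * j by rewrite /i /j; lia.
have -> : y = ay + 3 * i + j by rewrite /i /j; lia.
exact/gamma2tKK_le_spanning/spanning_size_cone.
Qed.

Lemma gamma2tKK_le_two_columns x y : 1 < x -> 1 < y -> gamma2tKK x y <= 2 * x.
Proof.
move=> x_gt1 y_gt1.
set j0 : 'I_y := Ordinal (ltnW y_gt1); set j1 : 'I_y := Ordinal y_gt1.
set S := [set u : 'I_x * 'I_y | u.2 \in [set j0; j1]].
apply: (@leq_trans #|S|); last first.
  have -> : S = setX setT [set j0; j1] by apply/setP => -[a b]; rewrite !inE.
  by rewrite cardsX cardsT card_ord mulnC leq_mul2r cards2 orbT.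
apply/gamma2t_le/total2domP => -[i j].
have [io ioi] := ord_other i x_gt1.
have j01 : j0 != j1 by [].
have [Sj|Sj] := boolP (j \in [set j0; j1]).
  set jo := if j == j0 then j1 else j0.
  have joj : jo != j.
    by move: Sj; rewrite /jo !inE; case: eqP => [->|_ /= /eqP ->]; rewrite // eq_sym.
  have Sjo : jo \in [set j0; j1] by rewrite /jo !inE; case: ifP; rewrite eqxx ?orbT.
  exists (i, jo), (io, j); rewrite !inE -!in_set2 Sj Sjo KK_rel_row KK_rel_col xpair_eqE.
  by rewrite [i == _]eq_sym [j == _]eq_sym (negbTE ioi) joj.
exists (i, j0), (i, j1); rewrite !inE -!in_set2 !set21 !set22 !KK_rel_row xpair_eqE eqxx j01.
by move: Sj; rewrite !inE negb_or => /andP[-> ->].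
Qed.

Lemma gamma2tKK_le_hook x y : 2 < x -> 2 < y -> gamma2tKK x y <= x + y - 1.
Proof.
move=> x_gt2 y_gt2.
set i0 : 'I_x := Ordinal (ltnW (ltnW x_gt2)); set j0 : 'I_y := Ordinal (ltnW (ltnW y_gt2)).
set R := [set (i0, j) | j in 'I_y]; set C := [set (i, j0) | i in 'I_x].
have inR j : (i0, j) \in R by rewrite imset_f.
have inC i : (i, j0) \in C by rewrite imset_f.
apply: (@leq_trans #|R :|: C|); last first.
  rewrite cardsU !card_imset; [|by move=> ? ? []|by move=> ? ? []].
  have : 0 < #|R :&: C| by apply/card_gt0P; exists (i0, j0); rewrite inE inR inC.
  by rewrite !card_ord; lia.
apply/gamma2t_le/total2domP => -[i j].
have [->|ii0] := eqVneq i i0.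
  have [j1 [j2 [j1j j2j j12]]] := ord_two_others j y_gt2.
  exists (i0, j1), (i0, j2); rewrite !inE !inR !KK_rel_row xpair_eqE eqxx.
  by rewrite ![j == _]eq_sym j1j j2j j12.
have [->|jj0] := eqVneq j j0.
  have [i1 [i2 [i1i i2i i12]]] := ord_two_others i x_gt2.
  exists (i1, j0), (i2, j0); rewrite !inE !inC ?orbT !KK_rel_col xpair_eqE eqxx andbT.
  by rewrite ![i == _]eq_sym i1i i2i i12.
exists (i, j0), (i0, j); rewrite !inE inR inC orbT KK_rel_row KK_rel_col xpair_eqE.
by rewrite (negbTE ii0) jj0.
Qed.

(** * Lower bound by discharging *)

Definition row_set n m (S : {set 'I_n * 'I_m}) (i : 'I_n) := [set u in S | u.1 == i].
Definition col_set n m (S : {set 'I_n * 'I_m}) (j : 'I_m) := [set u in S | u.2 == j].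

Definition swap (T1 T2 : Type) (u : T1 * T2) : T2 * T1 := (u.2, u.1).

Lemma swapK (T1 T2 : Type) : cancel (@swap T1 T2) (@swap T2 T1).
Proof. by case. Qed.

Lemma KK_rel_swap n m (u v : 'I_n * 'I_m) : KK_rel m n (swap u) (swap v) = KK_rel n m u v.
Proof. by rewrite /KK_rel /= orbC. Qed.

Definition tr n m (S : {set 'I_n * 'I_m}) : {set 'I_m * 'I_n} := [set swap u | u in S].

Lemma mem_tr n m (S : {set 'I_n * 'I_m}) v : (v \in tr S) = (swap v \in S).
Proof.
apply/imsetP/idP => [[u uS ->]|vS]; first by rewrite swapK.
by exists (swap v); rewrite ?swapK.
Qed.

Lemma card_tr n m (S : {set 'I_n * 'I_m}) : #|tr S| = #|S|.
Proof. exact/card_imset/(can_inj (@swapK _ _)). Qed.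

Lemma trK n m (S : {set 'I_n * 'I_m}) : tr (tr S) = S.
Proof. by apply/setP => u; rewrite !mem_tr swapK. Qed.

Lemma row_set_tr n m (S : {set 'I_n * 'I_m}) j : row_set (tr S) j = tr (col_set S j).
Proof. by apply/setP => u; rewrite !(inE, mem_tr). Qed.

Lemma col_set_tr n m (S : {set 'I_n * 'I_m}) i : col_set (tr S) i = tr (row_set S i).
Proof. by apply/setP => u; rewrite !(inE, mem_tr). Qed.

Lemma total2dom_tr n m (S : {set 'I_n * 'I_m}) :
  total2dom (KK_rel n m) S -> total2dom (KK_rel m n) (tr S).
Proof.
move=> /total2domP domS; apply/total2domP => v.
have [u1 [u2 [u1S u2S u12 r1 r2]]] := domS (swap v).
exists (swap u1), (swap u2); rewrite !mem_tr !swapK (inj_eq (can_inj (@swapK _ _))).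
by rewrite -[v]swapK !KK_rel_swap.
Qed.

Section RowColumnCounts.

Variables (n m : nat).
Implicit Types (S : {set 'I_n * 'I_m}) (v : 'I_n * 'I_m).

Lemma card_nbrs S v :
  #|[set u in S | KK_rel n m v u]| + 2 * (v \in S) = #|row_set S v.1| + #|col_set S v.2|.
Proof.
have -> : [set u in S | KK_rel n m v u] = (row_set S v.1 :\ v) :|: (col_set S v.2 :\ v).
  apply/setP => -[a b]; case: v => c d; rewrite !inE /KK_rel /= xpair_eqE.
  by rewrite ![c == _]eq_sym ![d == _]eq_sym; case: (a == c); case: (b == d); case: (_ \in S).
rewrite cardsU (cardsD1 v (row_set S v.1)) (cardsD1 v (col_set S v.2)) !inE !eqxx !andbT.
suff -> : (row_set S v.1 :\ v) :&: (col_set S v.2 :\ v) = set0.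
  rewrite cards0; set a := #|row_set S v.1 :\ v|; set b := #|col_set S v.2 :\ v|.
  by case: (v \in S) => /=; lia.
apply/setP => -[a b]; case: v => c d; rewrite !inE xpair_eqE /=.
by case: (a == c); case: (b == d); rewrite ?andbF.
Qed.

Lemma total2dom_row_col S v : total2dom (KK_rel n m) S ->
  2 + 2 * (v \in S) <= #|row_set S v.1| + #|col_set S v.2|.
Proof. by move=> /forallP/(_ v) nbrs; rewrite -card_nbrs leq_add2r. Qed.


Lemma empty_row_card S i :
  total2dom (KK_rel n m) S -> #|row_set S i| = 0 -> 2 * m <= #|S|.
Proof.
move=> domS rowi; rewrite (card_by_fibres snd).
have -> : 2 * m = \sum_(j : 'I_m) 2 by rewrite sum_nat_const card_ord mulnC.
apply: leq_sum => j _; have := total2dom_row_col (i, j) domS.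
by rewrite rowi; apply: leq_trans; apply: leq_addr.
Qed.

End RowColumnCounts.

Lemma empty_col_card n m (S : {set 'I_n * 'I_m}) j :
  total2dom (KK_rel n m) S -> #|col_set S j| = 0 -> 2 * n <= #|S|.
Proof.
move=> domS colj; rewrite -card_tr; apply: (empty_row_card (i := j)).
  exact: total2dom_tr.
by rewrite row_set_tr card_tr.
Qed.

(* A vertex of S whose row and column contain l and c points of S sends
   [charge l c] to its row and [charge c l] to its column: 20 in total. *)
Definition charge (l c : nat) : nat := if l == 1 then 16 else if c == 1 then 4 else 10.

Lemma charge_ge4 l c : 4 <= charge l c.
Proof. by rewrite /charge; case: ifP => _ //; case: ifP. Qed.

Lemma charge_swap l c : 4 <= l + c -> charge l c + charge c l = 20.
Proof. by rewrite /charge; case: eqP => [->|_]; case: eqP => [->|_] //=; case: eqP. Qed.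

Lemma line_charge (T : finType) (A : {set T}) (c : T -> nat) :
  0 < #|A| -> (forall u, u \in A -> 4 <= #|A| + c u) ->
  16 <= \sum_(u in A) charge #|A| (c u) + 4 * ((#|A| == 3) && [forall u in A, c u == 1]).
Proof.
move=> A_gt0 lineA.
have sum_ge : #|A| * 4 <= \sum_(u in A) charge #|A| (c u).
  by rewrite -sum_nat_const; apply: leq_sum => u _; apply: charge_ge4.
case A1: #|A| A_gt0 lineA sum_ge => [//|[|[|[|l]]]] _ lineA sum_ge; last by lia.
- by rewrite (eq_bigr (fun=> 16)) ?sum_nat_const ?A1 //= => u; rewrite /charge.
- rewrite (eq_bigr (fun=> 10)) ?sum_nat_const ?A1 // => u uA.
  by have := lineA u uA; rewrite /charge /=; case: eqP => [-> //|].
case: forall_inP => [//|/forall_inP]; first by lia.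
rewrite negb_forall_in => /existsP[u0 /andP[u0A cu0]].
rewrite (bigD1 u0) //= {1}/charge (negbTE cu0) /=.
suff : 8 <= \sum_(u in A | u != u0) charge 3 (c u) by lia.
have cardA' : #|[predD1 A & u0]| = 2 by move: (cardD1 u0 A); rewrite A1 u0A; lia.
have sum4 : \sum_(u in A | u != u0) 4 <= \sum_(u in A | u != u0) charge 3 (c u).
  by apply: leq_sum => u _; apply: charge_ge4.
apply: leq_trans sum4.
by rewrite (eq_bigl (mem [predD1 A & u0])) ?sum_nat_const ?cardA' // => u; rewrite !inE andbC.
Qed.

(* A tight line receives only 12; it is compensated by the bonus 4 below. *)
Definition tight_row n m (S : {set 'I_n * 'I_m}) i :=
  (#|row_set S i| == 3) && [forall u in row_set S i, #|col_set S u.2| == 1].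
Definition tight_col n m (S : {set 'I_n * 'I_m}) j :=
  (#|col_set S j| == 3) && [forall u in col_set S j, #|row_set S u.1| == 1].

Lemma tight_row_tr n m (S : {set 'I_n * 'I_m}) j : tight_row (tr S) j = tight_col S j.
Proof.
rewrite /tight_row row_set_tr card_tr; congr andb.
apply/forall_inP/forall_inP => lonely u uS.
  by have := lonely (swap u); rewrite mem_tr swapK col_set_tr card_tr; apply.
by rewrite col_set_tr card_tr; apply: (lonely (swap u)); rewrite -mem_tr.
Qed.

Lemma tight_col_tr n m (S : {set 'I_n * 'I_m}) i : tight_col (tr S) i = tight_row S i.
Proof. by rewrite -tight_row_tr trK. Qed.

Lemma row_charge n m (S : {set 'I_n * 'I_m}) :
  total2dom (KK_rel n m) S -> (forall i, 0 < #|row_set S i|) ->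
  16 * n <= \sum_(u in S) charge #|row_set S u.1| #|col_set S u.2|
            + 4 * #|[set i | tight_row S i]|.
Proof.
move=> domS rows_gt0.
rewrite -sum_nat_indicator (partition_big fst predT) //= -big_split /=.
have -> : 16 * n = \sum_(i : 'I_n) 16 by rewrite sum_nat_const card_ord mulnC.
apply: leq_sum => i _.
rewrite (eq_big (mem (row_set S i)) (fun u => charge #|row_set S i| #|col_set S u.2|)).
- apply: line_charge (rows_gt0 i) _ => u; rewrite inE => /andP[uS /eqP <-].
  by have := total2dom_row_col u domS; rewrite uS.
- by move=> u; rewrite !inE.
- by move=> u /andP[_ /eqP ->].
Qed.

Lemma col_charge n m (S : {set 'I_n * 'I_m}) :
  total2dom (KK_rel n m) S -> (forall j, 0 < #|col_set S j|) ->
  16 * m <= \sum_(u in S) charge #|col_set S u.2| #|row_set S u.1|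
            + 4 * #|[set j | tight_col S j]|.
Proof.
move=> domS cols_gt0.
have rows_gt0 j : 0 < #|row_set (tr S) j| by rewrite row_set_tr card_tr.
have := row_charge (total2dom_tr domS) rows_gt0.
rewrite (big_imset _ (in2W (can_inj (@swapK _ _)))) /=.
under eq_bigr do rewrite row_set_tr col_set_tr !card_tr.
suff -> : [set j | tight_row (tr S) j] = [set j | tight_col S j] by [].
by apply/setP => j; rewrite !inE tight_row_tr.
Qed.

Lemma total_charge n m (S : {set 'I_n * 'I_m}) :
  total2dom (KK_rel n m) S -> (forall i, 0 < #|row_set S i|) -> (forall j, 0 < #|col_set S j|) ->
  4 * (n + m) <= 5 * #|S| + #|[set i | tight_row S i]| + #|[set j | tight_col S j]|.
Proof.
move=> domS rows_gt0 cols_gt0.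
have := row_charge domS rows_gt0; have := col_charge domS cols_gt0.
have : \sum_(u in S) charge #|row_set S u.1| #|col_set S u.2|
       + \sum_(u in S) charge #|col_set S u.2| #|row_set S u.1| = #|S| * 20.
  rewrite -big_split -sum_nat_const /=; apply: eq_bigr => u uS; rewrite charge_swap //.
  by have := total2dom_row_col u domS; rewrite uS.
set w1 := \sum_(u in S) _; set w2 := \sum_(u in S) _; lia.
Qed.

(* The points of S in tight columns lie in pairwise distinct rows, each
   containing no other point of S, hence not tight. *)
Lemma tight_rows_cols_count n m (S : {set 'I_n * 'I_m}) :
  #|[set i | tight_row S i]| + 3 * #|[set j | tight_col S j]| <= n.
Proof.
set X := [set u in S | tight_col S u.2].
have lonely u : u \in X -> row_set S u.1 = [set u].
  rewrite inE => /andP[uS /andP[_ /forall_inP lone]].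
  have /cards1P[w rowu] : #|row_set S u.1| == 1 by apply: lone; rewrite !inE uS eqxx.
  have : u \in row_set S u.1 by rewrite !inE uS eqxx.
  by rewrite rowu inE => /eqP ->.
have cardX : #|X| = 3 * #|[set j | tight_col S j]|.
  rewrite (card_by_fibres snd) -sum_nat_indicator; apply: eq_bigr => j _.
  case tj: (tight_col S j); last first.
    by apply/eqP; rewrite cards_eq0; apply/eqP/setP => u; rewrite !inE; case: eqP => [->|]; rewrite ?tj ?andbF.
  have -> : [set u in X | u.2 == j] = col_set S j.
    by apply/setP => u; rewrite !inE; case: eqP => [->|]; rewrite ?tj ?andbT ?andbF.
  by case/andP: tj => /eqP ->.
have injX : {in X &, injective fst}.
  by move=> u v uX vX uv; have := lonely v vX; rewrite -uv lonely // => /setP/(_ v); rewrite !inE eqxx => /eqP.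
have disj : [set i | tight_row S i] :&: [set u.1 | u in X] = set0.
  apply/setP => i; rewrite !inE; apply/negP => /andP[/andP[/eqP row3 _] /imsetP[u uX iu]].
  by rewrite iu lonely // cards1 in row3.
have := max_card ([set i | tight_row S i] :|: [set u.1 | u in X]).
by rewrite cardsU disj cards0 subn0 card_ord (card_in_imset injX) cardX.
Qed.

Lemma total2dom_card_lower n m (S : {set 'I_n * 'I_m}) : n <= m -> total2dom (KK_rel n m) S ->
  2 * n <= #|S| \/ exists a b,
    [/\ a + 3 * b <= n, 3 * a + b <= m & 4 * (n + m) <= 5 * #|S| + a + b].
Proof.
move=> nm domS.
case: (pickP (fun i => #|row_set S i| == 0)) => [i /eqP rowi|rows].
  by left; have := empty_row_card domS rowi; lia.
case: (pickP (fun j => #|col_set S j| == 0)) => [j /eqP colj|cols].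
  by left; apply: empty_col_card domS colj.
right; exists #|[set i | tight_row S i]|, #|[set j | tight_col S j]|; split.
- exact: tight_rows_cols_count.
- have := tight_rows_cols_count (tr S).
  by rewrite (eq_finset _ (tight_row_tr S)) (eq_finset _ (tight_col_tr S)) addnC.
- by apply: total_charge domS _ _ => [i|j]; rewrite lt0n ?rows ?cols.
Qed.

(* According to m + 5n mod 8, a base block of shape (0,0), (1,4), (4,1), (2,2)
   or (5,5) completed by the cone covers K_(n-k) □ K_(m-k), k = 3 or 4. *)
Lemma split_bound_of_charge n m s a b : 6 <= n -> n <= m ->
  a + 3 * b <= n -> 3 * a + b <= m -> 4 * (n + m) <= 5 * s + a + b -> s + 2 < 2 * n ->
  5 + gamma2tKK (n - 3) (m - 3) <= s \/ 6 + gamma2tKK (n - 4) (m - 4) <= s.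
Proof.
move=> n_ge6 nm ha hb hs large.
have span14 : spanning_size 1 4 4 by apply: spanning_size_setT.
have span41 : spanning_size 4 1 4 by apply: spanning_size_setT.
have span22 : spanning_size 2 2 4 by apply: spanning_size_setT.
have span55 : spanning_size 5 5 8 := spanning_size_add span41 span14.
have via_cone k c ax ay sb : spanning_size ax ay sb ->
    ax <= n - k /\ ay <= m - k /\ ((m - k - ay) + 5 * (n - k - ax)) %% 8 = 0 /\
    n - k - ax <= 3 * (m - k - ay) /\ m - k - ay <= 3 * (n - k - ax) /\
    c + sb + 3 * ((n - k - ax) + (m - k - ay)) %/ 4 <= s ->
  c + gamma2tKK (n - k) (m - k) <= s.
  move=> span [? [? [? [? [? fit]]]]]; apply: leq_trans fit; rewrite -addnA leq_add2l.
  exact: gamma2tKK_le_cone.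
have : (m + 5 * n) %% 8 < 8 by rewrite ltn_mod.
case r: ((m + 5 * n) %% 8) => [|[|[|[|[|[|[|[|?]]]]]]]] // _.
- by right; apply: (via_cone 4 6 0 0 0 spanning_size0); lia.
- by right; apply: (via_cone 4 6 1 4 4 span14); lia.
- by left; apply: (via_cone 3 5 0 0 0 spanning_size0); lia.
- by left; apply: (via_cone 3 5 1 4 4 span14); lia.
- by right; apply: (via_cone 4 6 2 2 4 span22); lia.
- by right; apply: (via_cone 4 6 4 1 4 span41); lia.
- by right; apply: (via_cone 4 6 5 5 8 span55); lia.
- by left; apply: (via_cone 3 5 4 1 4 span41); lia.
Qed.

Theorem theorem8 (n m : nat) (h6n : 6 <= n) (hnm : n <= m) :
  minn (gamma2tKK 3 3 + gamma2tKK (n - 3) (m - 3))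
       (gamma2tKK 4 4 + gamma2tKK (n - 4) (m - 4)) <= gamma2tKK n m.
Proof.
have g33 : gamma2tKK 3 3 <= 5 by apply: gamma2tKK_le_hook.
have g44 : gamma2tKK 4 4 <= 6.
  exact/gamma2tKK_le_spanning/(spanning_size_cone 1 1 spanning_size0).
have gB : gamma2tKK (n - 4) (m - 4) <= 2 * (n - 4) by apply: gamma2tKK_le_two_columns; lia.
have min_le c : 5 + gamma2tKK (n - 3) (m - 3) <= c \/ 6 + gamma2tKK (n - 4) (m - 4) <= c ->
    minn (gamma2tKK 3 3 + gamma2tKK (n - 3) (m - 3))
         (gamma2tKK 4 4 + gamma2tKK (n - 4) (m - 4)) <= c.
  by rewrite geq_min => -[le_c|le_c]; apply/orP; [left|right]; lia.
apply: gamma2t_ge => [|S domS]; apply: min_le.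
  by right; rewrite card_prod !card_ord; nia.
have := total2dom_card_lower hnm domS; set s := #|S| => -[two_n|[a [b [ha hb hs]]]].
  by right; lia.
have [small|large] := leqP (2 * n) (s + 2); first by right; lia.
exact: split_bound_of_charge ha hb hs large.
Qed.
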